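(* Fix $p\in(0,1)$ and $B>0$, and suppose $Y_{a,b}\in[0,B]$ for all pairs. Under the Alternating Path Randomized Design, for a component $\mathcal{P}_s$ of length $k=k(s)$: if $\mathcal{P}_s$ is a path, \[\max_{Y_e\in[0,B]\ \forall e\in\mathcal{P}_s}\mathrm{Var}(\hat\Gamma_s)=\Big(\frac1p+\frac2{1-p}\Big)B^2k+\frac{2B^2(p^{k}-1)}{(1-p)^2};\] if $\mathcal{P}_s$ is a cycle, \[\max_{Y_e\in[0,B]\ \forall e\in\mathcal{P}_s}\mathrm{Var}(\hat\Gamma_s)=\Big(\frac1p+\frac2{1-p}\Big)B^2(k-1)+\frac{2B^2(p^{k-1}-1)}{(1-p)^2}+\frac{B^2\big(4+2p-p^2-p^3-p^{k-2}(2+p+p^2)\big)}{(1-p)(1+p^{k-1})}.\] Moreover, for both paths and cycles, \[\lim_{k\to\infty}\frac{1}{k}\max_{Y_e\in[0,B]\ \forall e\in\mathcal{P}_s}\mathrm{Var}(\hat\Gamma_s)=\frac{B^2(1+p)}{p(1-p)}.\]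
   Context: Setting: $2N$ agents; $\mathbb{M}^t,\mathbb{M}^c$ are one-to-one matchings (sets of unordered pairs of distinct agents, each agent in at most one pair); each pair $(a,b)$ has a fixed real potential outcome $Y_{a,b}$. The disagreement set $\triangle\mathbb{M}^{(t,c)}=(\mathbb{M}^t\cup\mathbb{M}^c)\setminus(\mathbb{M}^t\cap\mathbb{M}^c)$, viewed as a graph, has connected components, each an alternating path or cycle: a sequence $(v_{s,1},\dots,v_{s,k(s)+1})$ whose consecutive pairs $e_{s,j}=(v_{s,j},v_{s,j+1})$, $j=1,\dots,k(s)$, are its edges, alternating between $\triangle\mathbb{M}^{(t,c)}_t=\triangle\mathbb{M}^{(t,c)}\cap\mathbb{M}^t$ and $\triangle\mathbb{M}^{(t,c)}_c=\triangle\mathbb{M}^{(t,c)}\cap\mathbb{M}^c$; a cycle if $v_{s,1}=v_{s,k(s)+1}$, a path otherwise; $k(s)$ is its length. Alternating Path Randomized Design with parameter $p$: indicators $W_{s,j}\in\{0,1\}$, independent across components; within $\mathcal{P}_s$, $\mathbb{P}(W_{s,1}=1)=p/(1+p)$; for $2\le j\le k(s)$ (path) or $2\le j\le k(s)-1$ (cycle), conditionally on $W_{s,1},\dots,W_{s,j-1}$, $W_{s,j}=1$ with probability $p$ if $W_{s,j-1}=0$ and $W_{s,j}=0$ if $W_{s,j-1}=1$; for a cycle, $W_{s,k(s)}=1$ iff $W_{s,1}=W_{s,k(s)-1}=0$. $\hat\Gamma_s=\sum_{j:\,e_{s,j}\in\triangle\mathbb{M}^{(t,c)}_t}\frac{W_{s,j}Y_{e_{s,j}}}{\mathbb{P}(W_{s,j}=1)}-\sum_{j:\,e_{s,j}\in\triangle\mathbb{M}^{(t,c)}_c}\frac{W_{s,j}Y_{e_{s,j}}}{\mathbb{P}(W_{s,j}=1)}$.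 The limit statement is over components (paths, respectively cycles) whose length $k$ tends to infinity, with the maxima given by the formulas above. *)

From HB Require Import structures.
From mathcomp Require Import all_boot all_order all_algebra.
From mathcomp Require Import all_classical all_reals all_analysis.
Set Implicit Arguments. Unset Strict Implicit. Unset Printing Implicit Defensive.
Import Order.TTheory GRing.Theory Num.Theory.
Local Open Scope ring_scope.

(* A component P_s of length k is represented by its edges e_{s,1..k},
   indexed 0..k-1 (index j <-> edge e_{s,j+1}).  A realization of the
   design is a tuple w : k.-tuple bool, w_j = W_{s,j+1}. *)

Section APRD.
Variable R : realType.
Variable p : R.

Definition apr_init (b : bool) : R := if b then p / (1 + p) else 1 / (1 + p).

Definition apr_trans (prev cur : bool) : R :=
  if prev then (if cur then 0 else 1) else (if cur then p else 1 - p).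

Definition apr_step k (w : k.-tuple bool) (j : nat) : R :=
  if j == 0%N then apr_init (nth false w 0)
  else apr_trans (nth false w j.-1) (nth false w j).

Definition path_prob k (w : k.-tuple bool) : R :=
  \prod_(j < k) apr_step w j.

Definition cycle_prob k (w : k.-tuple bool) : R :=
  (\prod_(j < k.-1) apr_step w j) *
  (if nth false w k.-1 == (~~ nth false w 0 && ~~ nth false w k.-2) then 1 else 0).

Definition marg k (P : k.-tuple bool -> R) (j : nat) : R :=
  \sum_(w : k.-tuple bool) (if nth false w j then P w else 0).

(* sign of edge e_{s,j+1}: +1 if it lies in the treatment matching, -1 if in
   the control matching; the edges alternate, t1 says whether e_{s,1} is in M^t *)
Definition edge_sign (t1 : bool) (j : nat) : R :=
  if t1 then (-1) ^+ j else (-1) ^+ j.+1.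

Definition Gamma_hat k (P : k.-tuple bool -> R) (t1 : bool) (Y : nat -> R)
  (w : k.-tuple bool) : R :=
  \sum_(j < k) edge_sign t1 j *
     (if nth false w j then Y j / marg P j else 0).

Definition expect k (P : k.-tuple bool -> R) (X : k.-tuple bool -> R) : R :=
  \sum_(w : k.-tuple bool) P w * X w.

Definition variance k (P : k.-tuple bool -> R) (X : k.-tuple bool -> R) : R :=
  expect P (fun w => (X w - expect P X) ^+ 2).

Definition Var_Gamma k (P : k.-tuple bool -> R) (t1 : bool) (Y : nat -> R) : R :=
  variance P (Gamma_hat P t1 Y).

Definition is_max_var k (P : k.-tuple bool -> R) (t1 : bool) (B M : R) : Prop :=
  (forall Y : nat -> R, (forall j, (j < k)%N -> 0 <= Y j <= B) ->
       Var_Gamma P t1 Y <= M) /\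
  (exists Y : nat -> R, (forall j, (j < k)%N -> 0 <= Y j <= B) /\
       Var_Gamma P t1 Y = M).

End APRD.

From Pilot Require Import Defs.
From HB Require Import structures.
From mathcomp Require Import all_boot all_order all_algebra.
From mathcomp Require Import all_classical all_reals all_analysis.
From mathcomp Require Import zify.
From mathcomp.algebra_tactics Require Import ring lra.
Import Order.TTheory GRing.Theory Num.Theory.
Import numFieldNormedType.Exports.
Local Open Scope classical_set_scope.
Local Open Scope ring_scope.
Set Implicit Arguments. Unset Strict Implicit. Unset Printing Implicit Defensive.

(* Gamma_hat is a signed inverse-probability weighted sum of the indicators
   W_j, so its variance is the quadratic form sum_(i,j) Y_i Y_j K_ij with
   K_ij = (-1)^(i+j) (P(W_i = W_j = 1) / (P(W_i = 1) P(W_j = 1)) - 1).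
   Along a path the design is a stationary two-state Markov chain whose
   transition matrix has eigenvalues 1 and -p; hence every marginal is
   p/(1+p) and K_ij = p^|i-j| / p.  On a cycle the last indicator is a
   function of the path formed by the other edges, and its row of K is
   computed from the same chain.  All entries of K are nonnegative, so the
   maximum over the box [0,B]^k is attained at Y = B and equals
   B^2 sum_(i,j) K_ij; geometric sums give the closed forms, which are linear
   in k up to a bounded error, whence the limits. *)

Section BigSums.
Variable V : nmodType.

Lemma sum_square_recr n (F : nat -> nat -> V) :
  \sum_(i < n.+1) \sum_(j < n.+1) F i j =
  \sum_(i < n) \sum_(j < n) F i j + \sum_(j < n) F n j + \sum_(i < n) F i n + F n n.
Proof.
rewrite big_ord_recr /= big_ord_recr /=.
under eq_bigr do rewrite big_ord_recr /=.
by rewrite big_split /= -!addrA [X in _ + X]addrCA.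
Qed.

Lemma sum_tuple_rcons n (F : n.+1.-tuple bool -> V) :
  \sum_(w : n.+1.-tuple bool) F w =
  \sum_(u : n.-tuple bool) \sum_(b : bool) F (rcons_tuple u b).
Proof.
rewrite pair_big /= (reindex (fun x : n.-tuple bool * bool => rcons_tuple x.1 x.2)) //=.
exists (fun w : n.+1.-tuple bool =>
  (belast_tuple (nth false w 0) (behead_tuple w), last (nth false w 0) (behead w))).
  move=> [u b] _ /=.
  have [belastE lastE] : belast (nth false (rcons u b) 0) (behead (rcons u b)) = u /\
                          last (nth false (rcons u b) 0) (behead (rcons u b)) = b.
    by case: u => [[|x s] Hs] //=; rewrite belast_rcons last_rcons.
  by congr (_, _) => //; apply: val_inj.
move=> w _; apply: val_inj => /=.
by case: w => [[|x s] Hs] //=; rewrite -lastI.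
Qed.

Lemma sum_tuple0 (F : 0.-tuple bool -> V) : \sum_(w : 0.-tuple bool) F w = F [tuple].
Proof. by rewrite (big_pred1 [tuple]) // => u /=; apply/esym/eqP; exact: tuple0. Qed.

End BigSums.

Lemma nth_rcons_tuple T n (u : n.-tuple T) x0 b j :
  (j < n)%N -> nth x0 (rcons_tuple u b) j = nth x0 u j.
Proof. by move=> ltjn; rewrite /= nth_rcons size_tuple ltjn. Qed.

Lemma nth_rcons_tuple_last T n (u : n.-tuple T) x0 b : nth x0 (rcons_tuple u b) n = b.
Proof. by rewrite /= nth_rcons size_tuple ltnn eqxx. Qed.

Section VarianceKernel.
Variable R : realType.
Implicit Types (k : nat) (Y : nat -> R).

Definition joint_prob k (P : k.-tuple bool -> R) i j : R :=
  \sum_(w : k.-tuple bool) (if nth false w i && nth false w j then P w else 0).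

(* The sign (-1)^(i+j) is the product of the two alternating edge signs. *)
Definition cov_kernel k (P : k.-tuple bool -> R) i j : R :=
  (-1) ^+ (i + j) * (joint_prob P i j / (marg P i * marg P j) - 1).

Lemma margE k (P : k.-tuple bool -> R) j :
  marg P j = \sum_w P w * (nth false w j)%:R.
Proof. by apply: eq_bigr => w _; case: (nth false w j); rewrite ?mulr1 ?mulr0. Qed.

Lemma joint_probE k (P : k.-tuple bool -> R) i j :
  joint_prob P i j = \sum_w P w * (nth false w i && nth false w j)%:R.
Proof. by apply: eq_bigr => w _; case: (_ && _); rewrite ?mulr1 ?mulr0. Qed.

Lemma joint_probxx k (P : k.-tuple bool -> R) i : joint_prob P i i = marg P i.
Proof. by apply: eq_bigr => w _; rewrite andbb. Qed.

Lemma cov_kernelC k (P : k.-tuple bool -> R) i j : cov_kernel P i j = cov_kernel P j i.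
Proof.
rewrite /cov_kernel /joint_prob addnC [marg P i * _]mulrC.
by congr (_ * (_ / _ - _)); apply: eq_bigr => w _; rewrite andbC.
Qed.

Lemma varianceE k (P : k.-tuple bool -> R) X : \sum_w P w = 1 ->
  Defs.variance P X = Defs.expect P (fun w => X w ^+ 2) - Defs.expect P X ^+ 2.
Proof.
move=> P1; rewrite /Defs.variance /Defs.expect; set m := \sum_w P w * X w.
have -> : \sum_w P w * (X w - m) ^+ 2 =
          \sum_w (P w * X w ^+ 2 - (2 * m) * (P w * X w) + m ^+ 2 * P w).
  by apply: eq_bigr => w _; ring.
by rewrite big_split sumrB /= -!mulr_sumr P1 -/m; ring.
Qed.

Lemma edge_signM t1 i j : edge_sign R t1 i * edge_sign R t1 j = (-1) ^+ (i + j).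
Proof. by case: t1; rewrite /edge_sign -exprD // !addSn addnS !exprS; ring. Qed.

Lemma Var_Gamma_kernel k (P : k.-tuple bool -> R) t1 Y :
  \sum_w P w = 1 -> (forall j, (j < k)%N -> marg P j != 0) ->
  Var_Gamma P t1 Y = \sum_(i < k) \sum_(j < k) Y i * Y j * cov_kernel P i j.
Proof.
move=> P1 marg_neq0; rewrite /Var_Gamma varianceE //.
pose a j := edge_sign R t1 j * Y j / marg P j.
have GammaE w : Gamma_hat P t1 Y w = \sum_(j < k) a j * (nth false w j)%:R.
  by apply: eq_bigr => j _; case: (nth false w j); rewrite /= ?mulr1 ?mulrA ?mulr0.
have EGamma : Defs.expect P (Gamma_hat P t1 Y) = \sum_(j < k) a j * marg P j.
  rewrite /Defs.expect; under eq_bigr do rewrite GammaE mulr_sumr.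
  rewrite exchange_big /=; apply: eq_bigr => j _; rewrite margE mulr_sumr.
  by apply: eq_bigr => w _; rewrite mulrCA.
have EGamma2 : Defs.expect P (fun w => Gamma_hat P t1 Y w ^+ 2) =
               \sum_(i < k) \sum_(j < k) a i * a j * joint_prob P i j.
  rewrite /Defs.expect.
  under eq_bigr do rewrite GammaE expr2 mulr_suml mulr_sumr.
  under eq_bigr do under eq_bigr do rewrite mulr_sumr mulr_sumr.
  rewrite exchange_big /=; apply: eq_bigr => i _.
  rewrite exchange_big /=; apply: eq_bigr => j _.
  rewrite joint_probE mulr_sumr; apply: eq_bigr => w _.
  by case: (nth false w i); case: (nth false w j); rewrite /= ?mulr1 ?mulr0 ?mul0r //; ring.
rewrite EGamma EGamma2 expr2 mulr_suml -sumrB; apply: eq_bigr => i _.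
rewrite mulr_sumr -sumrB; apply: eq_bigr => j _.
rewrite /cov_kernel /a -(edge_signM t1 i j).
have := marg_neq0 _ (ltn_ord i); have := marg_neq0 _ (ltn_ord j).
move: (marg P i) (marg P j) => mi mj mj_neq0 mi_neq0.
by field; rewrite mi_neq0 mj_neq0.
Qed.

Lemma is_max_var_kernel k (P : k.-tuple bool -> R) t1 B :
  0 <= B -> \sum_w P w = 1 -> (forall j, (j < k)%N -> marg P j != 0) ->
  (forall i j, (i < k)%N -> (j < k)%N -> 0 <= cov_kernel P i j) ->
  is_max_var P t1 B (B ^+ 2 * \sum_(i < k) \sum_(j < k) cov_kernel P i j).
Proof.
move=> B_ge0 P1 marg_neq0 K_ge0.
have maxE : B ^+ 2 * \sum_(i < k) \sum_(j < k) cov_kernel P i j = Var_Gamma P t1 (fun=> B).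
  rewrite Var_Gamma_kernel // mulr_sumr; apply: eq_bigr => i _.
  by rewrite mulr_sumr; apply: eq_bigr => j _; rewrite expr2.
split; last by exists (fun=> B); split=> // j _; rewrite B_ge0 lexx.
move=> Y Y_box; rewrite maxE !Var_Gamma_kernel //.
apply: ler_sum => i _; apply: ler_sum => j _.
apply: ler_wpM2r; first exact: K_ge0.
have /andP[Yi0 YiB] := Y_box _ (ltn_ord i); have /andP[Yj0 YjB] := Y_box _ (ltn_ord j).
exact: ler_pM.
Qed.

Lemma is_max_var_unique k (P : k.-tuple bool -> R) t1 B M1 M2 :
  is_max_var P t1 B M1 -> is_max_var P t1 B M2 -> M1 = M2.
Proof.
move=> [le1 [Y1 [Y1_box attained1]]] [le2 [Y2 [Y2_box attained2]]].
apply/eqP; rewrite eq_le -{1}attained1 -{2}attained2.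
by rewrite le1 ?le2.
Qed.

End VarianceKernel.

Section MarkovChain.
Variables (R : realType) (p : R).
Hypotheses (p_gt0 : 0 < p) (p_lt1 : p < 1).

Local Notation init := (apr_init p).
Local Notation trans := (apr_trans p).

Let p_neq0 : p != 0. Proof. exact: lt0r_neq0. Qed.
Let onePp_neq0 : 1 + p != 0. Proof. by apply: lt0r_neq0; have := p_gt0; lra. Qed.
Let oneBp_neq0 : 1 - p != 0. Proof. by apply: lt0r_neq0; have := p_lt1; lra. Qed.

Lemma apr_trans_sum1 b : \sum_c trans b c = 1.
Proof. by rewrite big_bool; case: b; rewrite /apr_trans /=; ring. Qed.

Lemma path_prob_rcons n (u : n.+1.-tuple bool) b :
  path_prob p (rcons_tuple u b) = path_prob p u * trans (nth false u n) b.
Proof.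
rewrite /path_prob big_ord_recr /=; congr (_ * _).
  apply: eq_bigr => j _; rewrite /apr_step.
  have ltjn : (j.-1 < n.+1)%N by apply: leq_ltn_trans (leq_pred j) _.
  by rewrite !nth_rcons_tuple.
by rewrite /apr_step /= nth_rcons_tuple // nth_rcons_tuple_last.
Qed.

Lemma path_prob_tuple1 (u : 0.-tuple bool) b : path_prob p (rcons_tuple u b) = init b.
Proof. by rewrite /path_prob big_ord_recr big_ord0 /apr_step /= nth_rcons_tuple_last mul1r. Qed.

(* The forward algorithm of the chain, with step weights [g]. *)
Fixpoint forward (g : nat -> bool -> R) (m : nat) (c : bool) : R :=
  if m is m'.+1 then \sum_b forward g m' b * g m' b * trans b c else init c.

Lemma forward_cond n (g : nat -> bool -> R) c :
  \sum_(w : n.+1.-tuple bool)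
     path_prob p w * (\prod_(j < n) g j (nth false w j)) * (nth false w n == c)%:R
  = forward g n c.
Proof.
elim: n c => [|n IHn] c.
  rewrite sum_tuple_rcons sum_tuple0 big_bool !path_prob_tuple1 !big_ord0.
  by case: c; rewrite /= ?mulr1 ?mulr0 ?addr0 ?add0r.
have rconsE (u : n.+1.-tuple bool) b :
    path_prob p (rcons_tuple u b) * (\prod_(j < n.+1) g j (nth false (rcons_tuple u b) j)) *
      (nth false (rcons_tuple u b) n.+1 == c)%:R
    = path_prob p u * trans (nth false u n) b *
      (\prod_(j < n.+1) g j (nth false u j)) * (b == c)%:R.
  rewrite path_prob_rcons nth_rcons_tuple_last; congr (_ * _ * _).
  by apply: eq_bigr => j _; rewrite nth_rcons_tuple.
rewrite sum_tuple_rcons; under eq_bigr do under eq_bigr do rewrite rconsE; clear rconsE.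
have -> : \sum_(u : n.+1.-tuple bool) \sum_b
    (path_prob p u * trans (nth false u n) b * (\prod_(j < n.+1) g j (nth false u j)) * (b == c)%:R)
  = \sum_(u : n.+1.-tuple bool) path_prob p u * (\prod_(j < n) g j (nth false u j)) *
       (g n (nth false u n) * trans (nth false u n) c).
  apply: eq_bigr => u _; rewrite big_bool big_ord_recr /=.
  by case: c; rewrite /= ?mulr1 ?mulr0 ?addr0 ?add0r; ring.
rewrite /=; under [RHS]eq_bigr => b _ do rewrite -IHn mulr_suml mulr_suml.
rewrite exchange_big /=; apply: eq_bigr => u _.
by rewrite big_bool /=; case: (nth false u n); rewrite /= ?mulr1 ?mulr0 ?mul0r ?addr0 ?add0r; ring.
Qed.

Lemma forward_total n (g : nat -> bool -> R) :
  \sum_(w : n.-tuple bool) path_prob p w * \prod_(j < n) g j (nth false w j)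
  = \sum_c forward g n c.
Proof.
case: n => [|n].
  by rewrite sum_tuple0 /path_prob !big_ord0 big_bool /= /apr_init; field.
have splitE (w : n.+1.-tuple bool) : path_prob p w * \prod_(j < n.+1) g j (nth false w j)
    = \sum_c path_prob p w * (\prod_(j < n) g j (nth false w j)) * (nth false w n == c)%:R * g n c.
  rewrite big_bool big_ord_recr /=.
  by case: (nth false w n); rewrite /= ?mulr1 ?mulr0 ?addr0 ?add0r; ring.
under eq_bigr do rewrite splitE.
rewrite exchange_big /=; under eq_bigr do rewrite -mulr_suml forward_cond.
by rewrite /= exchange_big /=; apply: eq_bigr => b _; rewrite -mulr_sumr apr_trans_sum1 mulr1.
Qed.

Definition pi1 : R := p / (1 + p).

(* The transition matrix has eigenvalues 1 and -p, with stationary law [init];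
   [trans_pow d] is the d-step transition probability in closed form. *)
Definition trans_pow (d : nat) (b c : bool) : R :=
  if c then pi1 + (b%:R - pi1) * (- p) ^+ d else (1 - pi1) - (b%:R - pi1) * (- p) ^+ d.

Lemma apr_initE c : init c = if c then pi1 else 1 - pi1.
Proof. by rewrite /apr_init /pi1; case: c => //; field. Qed.

Lemma trans_pow0 b c : trans_pow 0 b c = (b == c)%:R.
Proof. by rewrite /trans_pow; case: b; case: c => /=; ring. Qed.

Lemma trans_powSr d b c : trans_pow d.+1 b c = \sum_x trans_pow d b x * trans x c.
Proof. by rewrite big_bool /trans_pow /pi1 /apr_trans exprS; case: b; case: c => /=; field. Qed.

Lemma trans_powSl d b c : trans_pow d.+1 b c = \sum_x trans b x * trans_pow d x c.
Proof. by rewrite big_bool /trans_pow /pi1 /apr_trans exprS; case: b; case: c => /=; field. Qed.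

Lemma trans_pow_sum1 d b : \sum_c trans_pow d b c = 1.
Proof. by rewrite big_bool /trans_pow /=; ring. Qed.

Lemma apr_init_stationary d c : \sum_b init b * trans_pow d b c = init c.
Proof. by rewrite big_bool !apr_initE /trans_pow /pi1; case: c => /=; field. Qed.

Section ForwardSteps.
Variable g : nat -> bool -> R.

Lemma forward_free m d c :
  (forall t, (t < d)%N -> forall b, g (m + t)%N b = 1) ->
  forward g (m + d) c = \sum_b forward g m b * trans_pow d b c.
Proof.
elim: d c => [|d IHd] c g1.
  by rewrite addn0 big_bool !trans_pow0; case: c => /=; ring.
have gmd b : g (m + d)%N b = 1 by apply: g1.
have {}IHd c' : forward g (m + d) c' = \sum_b forward g m b * trans_pow d b c'.
  by apply: IHd => t ltt; apply: g1; lia.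
rewrite addnS /=; under eq_bigr => b _ do rewrite gmd IHd.
under [RHS]eq_bigr => b _ do rewrite trans_powSr.
by rewrite !big_bool /=; ring.
Qed.

Lemma forward_stationary m c :
  (forall t, (t < m)%N -> forall b, g t b = 1) -> forward g m c = init c.
Proof. by move=> g1; rewrite -(add0n m) forward_free // apr_init_stationary. Qed.

Lemma forward_mass m d :
  (forall t, (t < d)%N -> forall b, g (m + t)%N b = 1) ->
  \sum_c forward g (m + d) c = \sum_c forward g m c.
Proof.
move=> g1; under eq_bigr do rewrite forward_free //.
by rewrite exchange_big /=; apply: eq_bigr => b _; rewrite -mulr_sumr trans_pow_sum1 mulr1.
Qed.

Lemma forward_pin m d v c :
  (forall b, g m b = (b == v)%:R) ->
  (forall t, (t < d)%N -> forall b, g (m.+1 + t)%N b = 1) ->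
  forward g (m.+1 + d) c = forward g m v * trans_pow d.+1 v c.
Proof.
move=> gv g1; rewrite forward_free // trans_powSl mulr_sumr; apply: eq_bigr => b _ /=.
by rewrite !big_bool /= !gv; clear gv g1; case: v => /=; ring.
Qed.

Lemma forward_pin_last m v :
  (forall b, g m b = (b == v)%:R) -> \sum_c forward g m.+1 c = forward g m v.
Proof.
move=> gv /=; rewrite exchange_big /=.
under eq_bigr do rewrite -mulr_sumr apr_trans_sum1 mulr1 gv.
by rewrite big_bool; clear gv; case: v => /=; ring.
Qed.

End ForwardSteps.

Definition pinned (l : seq (nat * bool)) (t : nat) (c : bool) : R :=
  \prod_(x <- l) (if x.1 == t then (c == x.2)%:R else 1).

Lemma prod_pinned n (l : seq (nat * bool)) (w : n.-tuple bool) :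
  all (fun x => (x.1 < n)%N) l ->
  \prod_(j < n) pinned l j (nth false w j) = \prod_(x <- l) (nth false w x.1 == x.2)%:R.
Proof.
move=> l_lt; rewrite /pinned exchange_big /= big_seq_cond [RHS]big_seq_cond.
apply: eq_bigr => x /andP[xl _].
have ltxn : (x.1 < n)%N by move/allP: l_lt => /(_ x xl).
rewrite (bigD1 (Ordinal ltxn)) //= eqxx big1 ?mulr1 // => j j_neq.
by case: eqP => // xj; move: j_neq; rewrite -val_eqE /= xj eqxx.
Qed.

Ltac pinned_simpl := rewrite /pinned ?big_cons ?big_nil /=;
  repeat match goal with
  | |- context [ (?a == ?b) ] =>
      let _ := constr:(a : nat) in
      first [ rewrite (_ : (a == b) = true); last by lia
            | rewrite (_ : (a == b) = false); last by lia ]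
  end; rewrite /= ?mulr1 ?mul1r.

Lemma pi1_gt0 : 0 < pi1.
Proof. by rewrite /pi1; apply: divr_gt0 => //; have := p_gt0; lra. Qed.

Lemma path_prob_sum1 n : \sum_(w : n.-tuple bool) path_prob p w = 1.
Proof.
transitivity (\sum_(w : n.-tuple bool)
                path_prob p w * \prod_(j < n) (fun _ _ => 1) j (nth false w j)).
  by apply: eq_bigr => w _; rewrite big1 ?mulr1.
rewrite (forward_total _ (fun _ _ => 1)); under eq_bigr do rewrite forward_stationary //.
by rewrite big_bool !apr_initE /=; ring.
Qed.

Lemma path_marg n j : (j < n)%N -> marg (path_prob p (k:=n)) j = pi1.
Proof.
move=> ltjn; rewrite margE.
transitivity (\sum_(w : n.-tuple bool) path_prob p w *
                \prod_(t < n) pinned [:: (j, true)] t (nth false w t)).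
  apply: eq_bigr => w _; rewrite prod_pinned /= ?ltjn // big_seq1.
  by case: (nth false w j).
rewrite forward_total (_ : n = (j.+1 + (n - j.+1))%N); last by lia.
rewrite forward_mass; last by move=> t ltt b; pinned_simpl.
rewrite (forward_pin_last (v := true)); last by move=> b; pinned_simpl.
by rewrite forward_stationary ?apr_initE // => t ltt b; pinned_simpl.
Qed.

Lemma path_joint n i j : (i < j)%N -> (j < n)%N ->
  joint_prob (path_prob p (k:=n)) i j = pi1 * trans_pow (j - i) true true.
Proof.
move=> ltij ltjn; rewrite joint_probE.
transitivity (\sum_(w : n.-tuple bool) path_prob p w *
                \prod_(t < n) pinned [:: (i, true); (j, true)] t (nth false w t)).
  apply: eq_bigr => w _; rewrite prod_pinned /=; last by rewrite (ltn_trans ltij ltjn) ltjn.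
  by rewrite !big_cons big_nil; case: (nth false w j); case: (nth false w i);
     rewrite /= ?mulr1 ?mulr0 ?mul0r.
rewrite forward_total (_ : n = (j.+1 + (n - j.+1))%N); last by lia.
rewrite forward_mass; last by move=> t ltt b; pinned_simpl.
rewrite (forward_pin_last (v := true)); last by move=> b; pinned_simpl.
rewrite (_ : j = (i.+1 + (j - i.+1))%N); last by lia.
rewrite (forward_pin (v := true)); first last.
- by move=> t ltt b; pinned_simpl.
- by move=> b; pinned_simpl.
rewrite forward_stationary ?apr_initE; last by move=> t ltt b; pinned_simpl.
by congr (_ * trans_pow _ _ _); lia.
Qed.

Lemma path_cov_kernel n i j : (i < n)%N -> (j < n)%N ->
  cov_kernel (path_prob p (k:=n)) i j = p ^+ (i - j + (j - i)) / p.
Proof.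
wlog leij : i j / (i <= j)%N.
  move=> kernelE ltin ltjn; case: (leqP i j) => [leij|/ltnW leji]; first exact: kernelE.
  by rewrite cov_kernelC kernelE // addnC.
have [d ->] : exists d, j = (i + d)%N by exists (j - i)%N; lia.
move=> ltin ltjn; rewrite (_ : (i - (i + d) + (i + d - i))%N = d); last by lia.
case: d ltjn {leij} => [|d] ltjn.
  rewrite addn0 /cov_kernel joint_probxx path_marg // -signr_odd addnn odd_double /= expr0.
  by rewrite /pi1; field; rewrite p_neq0 onePp_neq0.
rewrite /cov_kernel path_joint ?path_marg //; try lia.
rewrite -signr_odd (_ : odd (i + (i + d.+1)) = odd d.+1); last first.
  by rewrite addnA addnn oddD odd_double.
rewrite (_ : (i + d.+1 - i)%N = d.+1); last by lia.
rewrite /trans_pow (exprNn p) -(signr_odd _ d.+1) /pi1.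
by case: (odd d.+1) => /=; field; rewrite p_neq0 onePp_neq0.
Qed.

Lemma sum_geom n : \sum_(j < n) p ^+ j = (1 - p ^+ n) / (1 - p).
Proof.
by rewrite -[1 - p ^+ n]opprB subrX1 -mulNr opprB mulrC mulrA mulVf // mul1r.
Qed.

Lemma sum_geom_rev n : \sum_(j < n.+1) p ^+ (n - j) = \sum_(j < n.+1) p ^+ j.
Proof.
rewrite (reindex_inj rev_ord_inj) /=; apply: eq_bigr => j _.
by rewrite subSS subKn // -ltnS.
Qed.

Lemma sum_pow_distn n :
  \sum_(i < n) \sum_(j < n) p ^+ (i - j + (j - i)) =
  n%:R * (1 + p) / (1 - p) + 2 * p * (p ^+ n - 1) / (1 - p) ^+ 2.
Proof.
have sum_up m : \sum_(j < m) p ^+ (m - j) = p * (1 - p ^+ m) / (1 - p).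
  case: m => [|m]; first by rewrite big_ord0 expr0 subrr mulr0 mul0r.
  under eq_bigr => j _ do rewrite (subSn (ltn_ord j : (j <= m)%N)) exprS.
  by rewrite -mulr_sumr sum_geom_rev sum_geom mulrA.
elim: n => [|n IHn]; first by rewrite big_ord0 expr0; field.
rewrite (sum_square_recr _ (fun i j => p ^+ (i - j + (j - i)))) /= IHn.
have -> : \sum_(j < n) p ^+ (n - j + (j - n)) = \sum_(j < n) p ^+ (n - j).
  by apply: eq_bigr => j _; rewrite (_ : (j - n)%N = 0%N) ?addn0 //; have := ltn_ord j; lia.
have -> : \sum_(i < n) p ^+ (i - n + (n - i)) = \sum_(j < n) p ^+ (n - j).
  by apply: eq_bigr => j _; rewrite (_ : (j - n)%N = 0%N) ?add0n //; have := ltn_ord j; lia.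
by rewrite sum_up subnn addn0 expr0 (exprS p n) -addn1 natrD; field.
Qed.

Definition path_var_max (B : R) (k : nat) : R :=
  (1 / p + 2 / (1 - p)) * B ^+ 2 * k%:R + 2 * B ^+ 2 * (p ^+ k - 1) / (1 - p) ^+ 2.

Lemma path_is_max_var k t1 B : 0 <= B ->
  is_max_var (path_prob p (k:=k)) t1 B (path_var_max B k).
Proof.
move=> B_ge0.
have -> : path_var_max B k =
    B ^+ 2 * \sum_(i < k) \sum_(j < k) cov_kernel (path_prob p (k:=k)) i j.
  under eq_bigr do under eq_bigr do rewrite path_cov_kernel //.
  under eq_bigr do rewrite -mulr_suml.
  by rewrite -mulr_suml sum_pow_distn /path_var_max; field; rewrite oneBp_neq0 p_neq0.
apply: is_max_var_kernel => //.
- exact: path_prob_sum1.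
- by move=> j ltjk; rewrite path_marg // lt0r_neq0 // pi1_gt0.
- move=> i j ltik ltjk; rewrite path_cov_kernel //.
  by apply: divr_ge0; [exact: exprn_ge0 (ltW p_gt0) | exact: ltW].
Qed.

Lemma prod_apr_step_rcons n (u : n.-tuple bool) b :
  \prod_(j < n) apr_step p (rcons_tuple u b) j = \prod_(j < n) apr_step p u j.
Proof.
apply: eq_bigr => j _; rewrite /apr_step.
have ltj1n : (j.-1 < n)%N by apply: leq_ltn_trans (leq_pred j) _.
by case: (_ == _); rewrite !nth_rcons_tuple // (leq_ltn_trans (leq0n j)).
Qed.

Definition cycle_last n (u : n.+1.-tuple bool) : bool := ~~ nth false u 0 && ~~ nth false u n.

Lemma sum_cycle_prob n (F : n.+2.-tuple bool -> R) :
  \sum_(w : n.+2.-tuple bool) cycle_prob p w * F w =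
  \sum_(u : n.+1.-tuple bool) path_prob p u * F (rcons_tuple u (cycle_last u)).
Proof.
rewrite sum_tuple_rcons; apply: eq_bigr => u _.
have cycle_probE b : cycle_prob p (rcons_tuple u b) = path_prob p u * (b == cycle_last u)%:R.
  rewrite /cycle_prob /= prod_apr_step_rcons; congr (_ * _).
  rewrite (nth_rcons_tuple u _ b (ltn0Sn n)) (nth_rcons_tuple u _ b (ltnSn n)).
  by rewrite nth_rcons_tuple_last /cycle_last; case: (b == _).
under eq_bigr do rewrite cycle_probE.
by rewrite big_bool /cycle_last; case: (~~ _ && _); rewrite /= ?mulr1 ?mulr0 ?mul0r ?add0r ?addr0.
Qed.

Lemma cycle_prob_sum1 n : \sum_(w : n.+2.-tuple bool) cycle_prob p w = 1.
Proof.
transitivity (\sum_(w : n.+2.-tuple bool) cycle_prob p w * 1).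
  by apply: eq_bigr => w _; rewrite mulr1.
rewrite (sum_cycle_prob (fun=> 1)) -[RHS](path_prob_sum1 n.+1).
by apply: eq_bigr => u _; rewrite mulr1.
Qed.

Lemma cycle_marg n j : (j < n.+1)%N ->
  marg (cycle_prob p (k:=n.+2)) j = marg (path_prob p (k:=n.+1)) j.
Proof.
move=> ltjn; rewrite !margE (sum_cycle_prob (fun w => (nth false w j)%:R)).
by apply: eq_bigr => u _; rewrite nth_rcons_tuple.
Qed.

Lemma cycle_joint n i j : (i < n.+1)%N -> (j < n.+1)%N ->
  joint_prob (cycle_prob p (k:=n.+2)) i j = joint_prob (path_prob p (k:=n.+1)) i j.
Proof.
move=> ltin ltjn.
rewrite !joint_probE (sum_cycle_prob (fun w => (nth false w i && nth false w j)%:R)).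
by apply: eq_bigr => u _; rewrite !nth_rcons_tuple.
Qed.

Lemma cycle_cov_kernel n i j : (i < n.+1)%N -> (j < n.+1)%N ->
  cov_kernel (cycle_prob p (k:=n.+2)) i j = p ^+ (i - j + (j - i)) / p.
Proof.
by move=> ltin ltjn; rewrite -(path_cov_kernel ltin ltjn) /cov_kernel cycle_joint // !cycle_marg.
Qed.

Lemma cycle_marg_last n : (0 < n)%N ->
  marg (cycle_prob p (k:=n.+2)) n.+1 = init false * trans_pow n false false.
Proof.
move=> n_gt0; rewrite margE (sum_cycle_prob (fun w => (nth false w n.+1)%:R)).
transitivity (\sum_(w : n.+1.-tuple bool) path_prob p w *
                \prod_(t < n.+1) pinned [:: (0%N, false); (n, false)] t (nth false w t)).
  apply: eq_bigr => w _; rewrite nth_rcons_tuple_last prod_pinned /=; last by rewrite ltnS leqnn.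
  rewrite !big_cons big_nil /cycle_last.
  by case: (nth false w n); case: (nth false w 0); rewrite /= ?mulr1 ?mulr0 ?mul0r.
rewrite forward_total (forward_pin_last (v := false)); last by move=> b; pinned_simpl.
rewrite [X in forward _ X _](_ : n = (0.+1 + n.-1)%N); last by lia.
rewrite (forward_pin (v := false)); first last.
- by move=> t ltt b; pinned_simpl.
- by move=> b; pinned_simpl.
by congr (_ * trans_pow _ _ _); lia.
Qed.

Lemma cycle_joint_last n j : (0 < n)%N -> (j < n.+1)%N ->
  joint_prob (cycle_prob p (k:=n.+2)) j n.+1 =
  if (j == 0%N) || (j == n) then 0
  else init false * trans_pow j false true * trans_pow (n - j) true false.
Proof.
move=> n_gt0 ltjn.
rewrite joint_probE (sum_cycle_prob (fun w => (nth false w j && nth false w n.+1)%:R)).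
under eq_bigr do rewrite nth_rcons_tuple // nth_rcons_tuple_last.
case: ifP => [/orP[/eqP->|/eqP->]|j_inner].
- by apply: big1 => u _; rewrite /cycle_last; case: (nth false u 0); rewrite /= ?mulr0.
- by apply: big1 => u _; rewrite /cycle_last; case: (nth false u n); rewrite /= ?andbF ?mulr0.
move/negbT: j_inner; rewrite negb_or => /andP[/eqP j_neq0 /eqP j_neqn].
transitivity (\sum_(w : n.+1.-tuple bool) path_prob p w *
   \prod_(t < n.+1) pinned [:: (0%N, false); (j, true); (n, false)] t (nth false w t)).
  apply: eq_bigr => w _; rewrite prod_pinned /=; last by rewrite ltjn ltnS leqnn.
  rewrite !big_cons big_nil /cycle_last.
  by case: (nth false w n); case: (nth false w 0); case: (nth false w j);
     rewrite /= ?mulr1 ?mulr0 ?mul0r.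
rewrite forward_total (forward_pin_last (v := false)); last by move=> b; pinned_simpl.
rewrite [X in forward _ X _](_ : n = (j.+1 + (n - j).-1)%N); last by lia.
rewrite (forward_pin (v := true)); first last.
- by move=> t ltt b; pinned_simpl.
- by move=> b; pinned_simpl.
rewrite [X in forward _ X _](_ : j = (0.+1 + j.-1)%N); last by lia.
rewrite (forward_pin (v := false)); first last.
- by move=> t ltt b; pinned_simpl.
- by move=> b; pinned_simpl.
by rewrite /= (_ : j.-1.+1 = j) 1?(_ : (n - j).-1.+1 = n - j)%N //; lia.
Qed.

Lemma cycle_marg_last_even n : (0 < n)%N -> ~~ odd n ->
  marg (cycle_prob p (k:=n.+2)) n.+1 = (1 + p ^+ n.+1) / (1 + p) ^+ 2.
Proof.
move=> n_gt0 n_even; rewrite cycle_marg_last // apr_initE /trans_pow /= /pi1.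
rewrite (exprNn p) -signr_odd (negbTE n_even) expr0 mul1r exprS.
by field.
Qed.

Definition last_kernel n j : R :=
  (p ^+ j + p ^+ (n - j) - (-1) ^+ j * p ^+ n * (1 - p)) / (1 + p ^+ n.+1).

Lemma cycle_cov_kernel_last n j : (0 < n)%N -> ~~ odd n -> (j < n.+1)%N ->
  cov_kernel (cycle_prob p (k:=n.+2)) j n.+1 = last_kernel n j.
Proof.
move=> n_gt0 n_even ltjn.
rewrite /cov_kernel cycle_joint_last // cycle_marg // path_marg // cycle_marg_last_even //.
have [d nE] : exists d, n = (j + d)%N by exists (n - j)%N; lia.
have odd_d : odd d = odd j by move: n_even; rewrite nE oddD; case: (odd j); case: (odd d).
have pos_neq0 x : 0 < x -> 1 + p * x != 0.
  by move=> x_gt0; apply: lt0r_neq0; have := mulr_gt0 p_gt0 x_gt0; have := p_gt0; lra.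
subst n; rewrite /last_kernel addKn /trans_pow /= !(exprNn p).
rewrite -signr_odd (_ : odd (j + (j + d).+1) = ~~ odd j); last first.
  by rewrite addnS /= addnA addnn oddD odd_double odd_d.
rewrite -(signr_odd _ d) odd_d -(signr_odd _ j) exprS !exprD.
case: ifP => [/orP[/eqP j0|/eqP jd]|_].
- have := pos_neq0 _ (exprn_gt0 d p_gt0).
  by rewrite j0 /= !expr0 !mul1r mul0r /pi1 => pd_neq0; field.
- have d0 : d = 0%N by lia.
  have := pos_neq0 _ (exprn_gt0 j p_gt0).
  move: odd_d; rewrite d0 /= => /esym/negbT j_even; rewrite (negbTE j_even) /= !expr0.
  by rewrite !mulr1 mul0r /pi1 => pj_neq0; field.
have := pos_neq0 _ (mulr_gt0 (exprn_gt0 j p_gt0) (exprn_gt0 d p_gt0)).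
move: (p ^+ j) (p ^+ d) => a b ab_neq0.
by case: (odd j); rewrite /= ?expr1 ?expr0 /pi1; field; rewrite ab_neq0 onePp_neq0 p_neq0.
Qed.

Let onePpX_gt0 n : 0 < 1 + p ^+ n.
Proof. by have := exprn_gt0 n p_gt0; lra. Qed.

Lemma cycle_cov_kernel_lastlast n : (0 < n)%N -> ~~ odd n ->
  cov_kernel (cycle_prob p (k:=n.+2)) n.+1 n.+1 = (1 + p) ^+ 2 / (1 + p ^+ n.+1) - 1.
Proof.
move=> n_gt0 n_even.
rewrite /cov_kernel joint_probxx cycle_marg_last_even // -signr_odd addnn odd_double expr0 mul1r.
by have onePpX_neq0 := lt0r_neq0 (onePpX_gt0 n.+1); field; rewrite onePpX_neq0 onePp_neq0.
Qed.

Lemma sum_sign_alt n : \sum_(j < n.+1) (-1) ^+ j = (~~ odd n)%:R :> R.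
Proof.
elim: n => [|n IHn]; first by rewrite big_ord_recr big_ord0 /= add0r expr0.
by rewrite big_ord_recr /= IHn exprS -signr_odd; case: (odd n) => /=; ring.
Qed.

Lemma sum_last_kernel n : ~~ odd n ->
  \sum_(j < n.+1) last_kernel n j =
  (2 * (1 - p ^+ n.+1) / (1 - p) - p ^+ n * (1 - p)) / (1 + p ^+ n.+1).
Proof.
move=> n_even; rewrite /last_kernel -mulr_suml !sumrB big_split /=.
rewrite sum_geom_rev sum_geom -!mulr_suml sum_sign_alt n_even mul1r.
by have onePpX_neq0 := lt0r_neq0 (onePpX_gt0 n.+1); field; rewrite onePpX_neq0 oneBp_neq0.
Qed.

Lemma last_kernel_ge0 n j : (j < n.+1)%N -> 0 <= last_kernel n j.
Proof.
move=> ltjn; rewrite /last_kernel [in p ^+ n](_ : n = (j + (n - j))%N); last by lia.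
apply: divr_ge0; last exact: ltW.
rewrite exprD; have := exprn_gt0 j p_gt0; have := exprn_gt0 (n - j) p_gt0.
have := exprn_ile1 j (ltW p_gt0) (ltW p_lt1); have := exprn_ile1 (n - j) (ltW p_gt0) (ltW p_lt1).
move: (p ^+ j) (p ^+ (n - j)) => a b b_le1 a_le1 b_gt0 a_gt0.
have ab_ge0 : 0 <= a * b by apply: mulr_ge0; lra.
have abp_ge0 : 0 <= a * b * p by apply: mulr_ge0 => //; exact: ltW.
have aBb_ge0 : 0 <= a * (1 - b) by apply: mulr_ge0; lra.
by rewrite -signr_odd; case: (odd j); rewrite /= ?expr1 ?expr0; have := p_lt1; nra.
Qed.

Lemma cycle_cov_kernel_ge0 n i j : (0 < n)%N -> ~~ odd n -> (i < n.+2)%N -> (j < n.+2)%N ->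
  0 <= cov_kernel (cycle_prob p (k:=n.+2)) i j.
Proof.
move=> n_gt0 n_even.
wlog leij : i j / (i <= j)%N.
  move=> ge0 ltin ltjn; case: (leqP i j) => [leij|/ltnW leji]; first exact: ge0.
  by rewrite cov_kernelC; apply: ge0.
move=> ltin; rewrite ltnS leq_eqVlt => /orP[/eqP->|ltjn].
  case: (ltnP i n.+1) => [ltin'|lein].
    by rewrite cycle_cov_kernel_last // last_kernel_ge0.
  rewrite (_ : i = n.+1); last by lia.
  rewrite cycle_cov_kernel_lastlast // subr_ge0 ler_pdivlMr // mul1r.
  have : p ^+ n.+1 <= p by rewrite exprS ler_piMr ?exprn_ile1 ?ltW.
  by have := p_gt0; nra.
rewrite cycle_cov_kernel ?(leq_ltn_trans leij) //.
by apply: divr_ge0; [exact: exprn_ge0 (ltW p_gt0) | exact: ltW].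
Qed.

Lemma cycle_kernel_sum n : (0 < n)%N -> ~~ odd n ->
  \sum_(i < n.+2) \sum_(j < n.+2) cov_kernel (cycle_prob p (k:=n.+2)) i j =
  (\sum_(i < n.+1) \sum_(j < n.+1) p ^+ (i - j + (j - i))) / p
  + 2 * \sum_(j < n.+1) last_kernel n j + ((1 + p) ^+ 2 / (1 + p ^+ n.+1) - 1).
Proof.
move=> n_gt0 n_even; rewrite sum_square_recr cycle_cov_kernel_lastlast //.
under eq_bigr do under eq_bigr do rewrite cycle_cov_kernel //.
under [X in _ + X + _ + _]eq_bigr do rewrite cov_kernelC cycle_cov_kernel_last //.
under [X in _ + X + _]eq_bigr do rewrite cycle_cov_kernel_last //.
rewrite mulr_suml; under [in RHS]eq_bigr do rewrite mulr_suml.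
by rewrite mulr2n mulrDl mul1r !addrA.
Qed.

Definition cycle_var_extra (B : R) (n : nat) : R :=
  B ^+ 2 * (4 + 2 * p - p ^+ 2 - p ^+ 3 - p ^+ n * (2 + p + p ^+ 2))
  / ((1 - p) * (1 + p ^+ n.+1)).

Lemma cycle_is_max_var n t1 B : (0 < n)%N -> ~~ odd n -> 0 <= B ->
  is_max_var (cycle_prob p (k:=n.+2)) t1 B (path_var_max B n.+1 + cycle_var_extra B n).
Proof.
move=> n_gt0 n_even B_ge0.
have -> : path_var_max B n.+1 + cycle_var_extra B n =
    B ^+ 2 * \sum_(i < n.+2) \sum_(j < n.+2) cov_kernel (cycle_prob p (k:=n.+2)) i j.
  rewrite cycle_kernel_sum // sum_pow_distn sum_last_kernel // /path_var_max /cycle_var_extra.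
  rewrite !(exprS p n); have := onePpX_gt0 n.+1; rewrite exprS.
  move: (p ^+ n) => x /lt0r_neq0 onePpx_neq0.
  by field; rewrite onePpx_neq0 oneBp_neq0 p_neq0.
apply: is_max_var_kernel => //.
- exact: cycle_prob_sum1.
- move=> j; rewrite ltnS leq_eqVlt => /orP[/eqP->|ltjn].
    by rewrite cycle_marg_last_even // lt0r_neq0 // divr_gt0 // exprn_gt0 //; have := p_gt0; lra.
  by rewrite cycle_marg // path_marg // lt0r_neq0 // pi1_gt0.
- by move=> i j; apply: cycle_cov_kernel_ge0.
Qed.

End MarkovChain.

Section Asymptotics.
Variable R : realType.

Lemma cvg_dist_le_harmonic (u : nat -> R) (L C : R) (N : nat) :
  (forall k, `|u (k + N)%N - L| <= C / k.+1%:R) -> u @ \oo --> L.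
Proof.
move=> dist_le; rewrite -(cvg_shiftn N); apply/subr_cvg0.
apply: (@squeeze_cvgr _ _ _ _ (fun k => - (C * harmonic k)) (fun k => C * harmonic k)).
- by apply: nearW => k /=; rewrite -ler_norml; exact: dist_le.
- by rewrite -oppr0 -(mulr0 C); apply: cvgN; apply: cvgMl_tmp; exact: cvg_harmonic.
- by rewrite -(mulr0 C); apply: cvgMl_tmp; exact: cvg_harmonic.
Qed.

Lemma cvg_ratio_bounded_error (u : nat -> R) (d : nat -> nat) (L C : R) (N : nat) :
  (0 < N)%N -> (forall k, (k <= d k)%N) ->
  (forall k, (N <= k)%N -> `|u k - L * (d k)%:R| <= C) ->
  (fun k => u k / (d k)%:R) @ \oo --> L.
Proof.
move=> N_gt0 le_d err_le; apply: (@cvg_dist_le_harmonic _ L C N) => k.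
have C_ge0 : 0 <= C by apply: le_trans (err_le N (leqnn N)).
have d_ge : (k.+1 <= d (k + N))%N by apply: leq_trans (le_d _); lia.
have d_pos : (0 < d (k + N))%N by apply: leq_trans d_ge.
have d_gt0 : 0 < (d (k + N))%:R :> R by rewrite ltr0n.
rewrite -[L in X in `|X|](mulfK (lt0r_neq0 d_gt0)) -mulrBl normrM normfV normr_nat.
apply: le_trans (_ : C / (d (k + N))%:R <= _).
  by rewrite ler_pM2r ?invr_gt0 // err_le // leq_addl.
by rewrite ler_wpM2l // lef_pV2 ?posrE ?ltr0n ?ler_nat.
Qed.

End Asymptotics.

Section VarianceAsymptotics.
Variables (R : realType) (p B : R).
Hypotheses (p_gt0 : 0 < p) (p_lt1 : p < 1) (B_ge0 : 0 <= B).

Local Notation L := (B ^+ 2 * (1 + p) / (p * (1 - p))).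

Let p_neq0 : p != 0. Proof. exact: lt0r_neq0. Qed.
Let oneBp_gt0 : 0 < 1 - p. Proof. by have := p_lt1; lra. Qed.

Lemma path_var_max_error k :
  `|path_var_max p B k - L * k%:R| <= 2 * B ^+ 2 / (1 - p) ^+ 2.
Proof.
have -> : path_var_max p B k - L * k%:R = 2 * B ^+ 2 / (1 - p) ^+ 2 * (p ^+ k - 1).
  by rewrite /path_var_max; field; rewrite lt0r_neq0 // p_neq0.
have c_ge0 : 0 <= 2 * B ^+ 2 / (1 - p) ^+ 2.
  by apply: divr_ge0; [apply: mulr_ge0; [exact: ler0n | exact: sqr_ge0] | exact: sqr_ge0].
rewrite normrM (ger0_norm c_ge0); apply: (ler_piMr c_ge0).
rewrite ler0_norm; last by rewrite subr_le0 exprn_ile1 ?ltW.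
by rewrite opprB; have := exprn_ge0 k (ltW p_gt0); lra.
Qed.

Lemma cycle_var_extra_bound n : `|cycle_var_extra p B n| <= 6 * B ^+ 2 / (1 - p).
Proof.
have p_ge0 := ltW p_gt0; have oneBp_ge0 := ltW oneBp_gt0.
rewrite /cycle_var_extra [p ^+ n.+1]exprS.
have := exprn_ge0 n p_ge0; have := exprn_ile1 n p_ge0 (ltW p_lt1).
move: (p ^+ n) => x x_le1 x_ge0.
have px_ge0 : 0 <= p * x by exact: mulr_ge0.
have p2_ge0 : 0 <= p ^+ 2 by exact: sqr_ge0.
have p3_ge0 : 0 <= p ^+ 3 by exact: exprn_ge0.
have B2_ge0 : 0 <= B ^+ 2 by exact: sqr_ge0.
set N := 4 + 2 * p - p ^+ 2 - p ^+ 3 - x * (2 + p + p ^+ 2).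
have N_ge0 : 0 <= N.
  (* N = (1 - x) (2 + p + p^2) + (1 - p) (2 + 3 p + p^2) *)
  have : 0 <= (1 - x) * (2 + p + p ^+ 2) by apply: mulr_ge0; lra.
  have : 0 <= (1 - p) * (2 + 3 * p + p ^+ 2) by apply: mulr_ge0; lra.
  by rewrite /N !exprS expr0; nra.
have N_le6 : N <= 6.
  have : 0 <= x * (2 + p + p ^+ 2) by apply: mulr_ge0; lra.
  by rewrite /N; lra.
have -> : B ^+ 2 * N / ((1 - p) * (1 + p * x)) = B ^+ 2 / (1 - p) * (N / (1 + p * x)).
  by field; rewrite !lt0r_neq0 //; lra.
have -> : 6 * B ^+ 2 / (1 - p) = B ^+ 2 / (1 - p) * 6 by ring.
have a_ge0 : 0 <= B ^+ 2 / (1 - p) by exact: divr_ge0.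
rewrite normrM (ger0_norm a_ge0); apply: ler_wpM2l => //.
rewrite ger0_norm; last by apply: divr_ge0 => //; lra.
by rewrite ler_pdivrMr; [nra | lra].
Qed.

Lemma path_max_var_cvg t1 (M : nat -> R) :
  (forall k, (0 < k)%N -> is_max_var (path_prob p (k:=k)) t1 B (M k)) ->
  (fun k => M k / k%:R) @ \oo --> L.
Proof.
move=> M_max; apply: (@cvg_ratio_bounded_error _ M id L _ 1%N) => // k k_gt0.
rewrite (is_max_var_unique (M_max k k_gt0) (path_is_max_var p_gt0 p_lt1 k t1 B_ge0)).
exact: path_var_max_error.
Qed.

Lemma cycle_max_var_cvg t1 (M : nat -> R) :
  (forall k, (4 <= k)%N -> ~~ odd k -> is_max_var (cycle_prob p (k:=k)) t1 B (M k)) ->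
  (fun m => M m.*2 / (m.*2)%:R) @ \oo --> L.
Proof.
move=> M_max.
apply: (@cvg_ratio_bounded_error _ (fun m => M m.*2) double L
          (2 * B ^+ 2 / (1 - p) ^+ 2 + L + 6 * B ^+ 2 / (1 - p)) 2) => // [m|m m_ge2].
  by rewrite -addnn leq_addr.
have [n mE] : exists n, m.*2 = n.+2 by exists (m.*2).-2; lia.
have n_gt0 : (0 < n)%N by lia.
have k_even : ~~ odd n.+2 by rewrite -mE odd_double.
have n_even : ~~ odd n by move: k_even; rewrite /= negbK.
have M_cycle := cycle_is_max_var p_gt0 p_lt1 t1 n_gt0 n_even B_ge0.
rewrite /= mE (is_max_var_unique (M_max _ _ k_even) M_cycle); last by lia.
have L_ge0 : 0 <= L.
  apply: divr_ge0; first by rewrite mulr_ge0 ?sqr_ge0 // addr_ge0 ?ler01 // ltW.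
  by rewrite mulr_ge0 ?ltW.
rewrite -natr1 (_ : _ - _ =
  path_var_max p B n.+1 - L * n.+1%:R - L + cycle_var_extra p B n); last by ring.
apply: le_trans (ler_normD _ _) _; apply: lerD; last exact: cycle_var_extra_bound.
apply: le_trans (ler_normB _ _) _; apply: lerD; first exact: path_var_max_error.
by rewrite ger0_norm.
Qed.

End VarianceAsymptotics.

Unset Implicit Arguments.
Theorem theorem2 (R : realType) (p B : R) (t1 : bool) :
  0 < p < 1 -> 0 < B ->
  (* paths of length k >= 1 *)
  (forall k : nat, (0 < k)%N ->
     is_max_var (@path_prob R p k) t1 B
       ((1 / p + 2 / (1 - p)) * B ^+ 2 * k%:R
        + 2 * B ^+ 2 * (p ^+ k - 1) / (1 - p) ^+ 2)) /\
  (* alternating cycles: even length k >= 4 *)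
  (forall k : nat, (4 <= k)%N -> ~~ odd k ->
     is_max_var (@cycle_prob R p k) t1 B
       ((1 / p + 2 / (1 - p)) * B ^+ 2 * (k.-1)%:R
        + 2 * B ^+ 2 * (p ^+ k.-1 - 1) / (1 - p) ^+ 2
        + B ^+ 2 * (4 + 2 * p - p ^+ 2 - p ^+ 3 - p ^+ k.-2 * (2 + p + p ^+ 2))
          / ((1 - p) * (1 + p ^+ k.-1)))) /\
  (* limit for paths *)
  (forall M : nat -> R,
     (forall k : nat, (0 < k)%N -> is_max_var (@path_prob R p k) t1 B (M k)) ->
     (fun k : nat => M k / k%:R) @ \oo --> B ^+ 2 * (1 + p) / (p * (1 - p))) /\
  (* limit for cycles (lengths k = 2m, m -> oo) *)
  (forall M : nat -> R,
     (forall k : nat, (4 <= k)%N -> ~~ odd k ->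
        is_max_var (@cycle_prob R p k) t1 B (M k)) ->
     (fun m : nat => M m.*2 / (m.*2)%:R) @ \oo --> B ^+ 2 * (1 + p) / (p * (1 - p))).
Proof.
move=> /andP[p_gt0 p_lt1] /ltW B_ge0.
split; [|split; [|split]].
- by move=> k _; exact: (path_is_max_var p_gt0 p_lt1 k t1 B_ge0).
- move=> k k_ge4 k_even; have [n kE] : exists n, k = n.+2 by exists k.-2; lia.
  rewrite kE in k_ge4 k_even *; rewrite /= negbK in k_even.
  by apply: (cycle_is_max_var p_gt0 p_lt1 t1 _ k_even B_ge0); lia.
- exact: path_max_var_cvg.
- exact: cycle_max_var_cvg.
Qed.
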